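(* Let $\mathcal{G}$ be a graph of groups over $Y$ and let $w=g_0y_1g_1\cdots y_ng_n$ be a Britton-reduced $\mathcal{G}$-factorization with $n\ge1$. Suppose $$y_{\lfloor n/2+1\rfloor}g_{\lfloor n/2+1\rfloor}\cdots y_ng_n\,g_0\,y_1g_1\cdots y_{\lfloor n/2\rfloor}g_{\lfloor n/2\rfloor}$$ rewrites by finitely many Britton reductions to a Britton-reduced word $\hat w$. Then $\hat w$ is cyclically Britton-reduced and $w$ and $\hat w$ are conjugate in $F(\mathcal{G})$.
   Context: A graph $Y$ (Serre) has vertices $V(Y)$, edges $E(Y)$, maps $\iota,\tau$ and a fixed-point-free involution $y\mapsto\bar y$ with $\iota(\bar y)=\tau(y)$. A graph of groups $\mathcal{G}$ assigns groups $G_a$ ($a\in V(Y)$), $G_y=G_{\bar y}$ ($y\in E(Y)$) and injective homomorphisms $G_y\to G_{\iota(y)}$, $c\mapsto c^y$. With $\Delta=E(Y)\cup\bigcup_a(G_a\setminus\{1\})$, $F(\mathcal{G})$ is $\Delta^*$ modulo $gh=[gh]$ ($g,h\in G_a$, product in $G_a$, $1$ = empty word), $\bar yy=1$ and $y\,c^{\bar y}\bar y=c^y$ ($c\in G_y$). A $\mathcal{G}$-factorization is a word $g_0y_1g_1\cdots y_ng_n$ with $\tau(y_i)=\iota(y_{i+1})$, $\tau(y_n)=\iota(y_1)$, $g_0\in G_{\iota(y_1)}$, $g_i\in G_{\tau(y_i)}$ (trivial $g_i$ omitted). Britton reductions are the rewriting rules $gh\to[gh]$ ($g,h\in G_a\setminus\{1\}$)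 and $y\,c^{\bar y}\,\bar y\to c^y$ ($y\in E(Y)$, $c\in G_y$). A word is Britton-reduced if no rule applies, and cyclically Britton-reduced if every cyclic permutation $u'u$ of it (where the word is $uu'$) is Britton-reduced. *)

From Stdlib Require Import List Relations ClassicalEpsilon.
Import ListNotations.
Set Implicit Arguments.

Record Grp := {
  gcar :> Type;
  gmul : gcar -> gcar -> gcar;
  gone : gcar;
  ginv : gcar -> gcar;
  gmulA : forall x y z, gmul x (gmul y z) = gmul (gmul x y) z;
  gmul1g : forall x, gmul gone x = x;
  gmulVg : forall x, gmul (ginv x) x = gone
}.

Record GraphOfGroups := {
  V : Type;
  E : Type;
  iota : E -> V;
  tau : E -> V;
  bar : E -> E;
  bar_bar : forall y, bar (bar y) = y;
  bar_neq : forall y, bar y <> y;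
  iota_bar : forall y, iota (bar y) = tau y;
  Gv : V -> Grp;
  Ge : E -> Grp;
  Ge_bar : forall y, Ge (bar y) = Ge y;
  phi : forall y, Ge y -> Gv (iota y);
  phi_mul : forall y c d, phi y (gmul _ c d) = gmul _ (phi y c) (phi y d);
  phi_inj : forall y c d, phi y c = phi y d -> c = d
}.

Section Words.
Variable G : GraphOfGroups.

Unset Implicit Arguments.
Inductive letter : Type :=
| Edge : E G -> letter
| Elt : forall a : V G, forall g : Gv G a, g <> gone (Gv G a) -> letter.

Set Implicit Arguments.
Definition word := list letter.

Definition gword (a : V G) (g : Gv G a) : word :=
  match excluded_middle_informative (g = gone (Gv G a)) with
  | left _ => []
  | right H => [Elt a g H]
  end.

(* c in G_y viewed as an element of G_{bar y} (the same group). *)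
Definition ecast (y : E G) (c : Ge G y) : Ge G (bar G y) :=
  eq_rect _ gcar c _ (eq_sym (Ge_bar G y)).

(* c^{bar y}, an element of G_{iota(bar y)} = G_{tau y} *)
Definition cbar (y : E G) (c : Ge G y) : Gv G (iota G (bar G y)) :=
  phi G (bar G y) (@ecast y c).

Inductive brule : word -> word -> Prop :=
| br_mul : forall a (g h : Gv G a) Hg Hh,
    brule [Elt a g Hg; Elt a h Hh] (gword a (gmul _ g h))
| br_conj : forall y (c : Ge G y),
    brule ([Edge y] ++ gword (iota G (bar G y)) (@cbar y c) ++ [Edge (bar G y)]) (gword (iota G y) (phi G y c)).

Inductive frel : word -> word -> Prop :=
| fr_mul : forall a (g h : Gv G a) Hg Hh,
    frel [Elt a g Hg; Elt a h Hh] (gword a (gmul _ g h))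
| fr_inv : forall y, frel [Edge (bar G y); Edge y] []
| fr_conj : forall y (c : Ge G y),
    frel ([Edge y] ++ gword (iota G (bar G y)) (@cbar y c) ++ [Edge (bar G y)]) (gword (iota G y) (phi G y c)).

Definition ctx (R : word -> word -> Prop) (u v : word) : Prop :=
  exists x z l r, R l r /\ u = x ++ l ++ z /\ v = x ++ r ++ z.

Definition bstep := ctx brule.

(* Equality in F(G): congruence generated by the defining relations. *)
Definition feq := clos_refl_sym_trans word (ctx frel).

Definition britton_reduced (w : word) : Prop := ~ exists w', bstep w w'.

Definition cyc_britton_reduced (w : word) : Prop :=
  forall u u', w = u ++ u' -> britton_reduced (u' ++ u).

(* Conjugacy in F(G): w' = u w u^{-1} with v = u^{-1}. *)
Definition conjugate (w w' : word) : Prop :=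
  exists u v, feq (u ++ v) [] /\ feq (v ++ u) [] /\ feq (u ++ w ++ v) w'.

Definition seg := { y : E G & Gv G (tau G y) }.

Definition segword (s : seg) : word := Edge (projT1 s) :: gword (tau G (projT1 s)) (projT2 s).

Fixpoint chain (ys : list (E G)) : Prop :=
  match ys with
  | y1 :: ((y2 :: _) as t) => tau G y1 = iota G y2 /\ chain t
  | _ => True
  end.

Definition is_factorization (a0 : V G) (segs : list seg) : Prop :=
  match map (@projT1 _ _) segs with
  | [] => False
  | y1 :: _ as ys =>
      chain ys /\ tau G (last ys y1) = iota G y1 /\ a0 = iota G y1
  end.

Definition fword (a0 : V G) (g0 : Gv G a0) (segs : list seg) : word :=
  gword a0 g0 ++ concat (map segword segs).

Definition rotated (a0 : V G) (g0 : Gv G a0) (segs : list seg) : word :=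
  let k := Nat.div (length segs) 2 in
  concat (map segword (skipn k segs)) ++ gword a0 g0 ++
  concat (map segword (firstn k segs)).

End Words.

From Stdlib Require Import List Relations Arith Lia ClassicalEpsilon.
Import ListNotations.

(* Write w = P S with P = g0 y1 g1 ... yk gk, S = y(k+1) g(k+1) ... yn gn and
   k = floor(n/2); the rotated word is S P, which is conjugate to w by P.  As P S
   is reduced, so are P and S, and every Britton reduction of S P, or of a word
   derived from it, happens at the junction: it merges two vertex letters or
   cancels y c ybar using one edge from each side.  Hence every derived word has
   the form L M R with L a prefix of S, R a suffix of P, M at most one vertex
   letter, and L having as many edges as R or one more.  A redex wrapping around
   such a reduced word is then either two vertex letters forming the whole word,
   or y c ybar with ybar the first edge of S and y c a suffix of P, i.e. a redex
   of w itself. *)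

Lemma infix_app_cases {A : Type} (x l z u v : list A) : x ++ l ++ z = u ++ v ->
  (exists t, u = x ++ l ++ t /\ z = t ++ v) \/
  (exists t, v = t ++ l ++ z /\ x = u ++ t) \/
  (exists l1 l2, l = l1 ++ l2 /\ l1 <> [] /\ l2 <> [] /\ u = x ++ l1 /\ v = l2 ++ z).
Proof.
  intros E; apply app_eq_app in E as [t [[-> Ez] | [-> Ex]]].
  - right; left; exists t; auto.
  - symmetry in Ex; apply app_eq_app in Ex as [t' [[-> Ez] | [-> Et]]].
    + left; exists t'; rewrite app_assoc; auto.
    + destruct t as [|a t]; [right; left; exists []; rewrite !app_nil_r; auto|].
      destruct t' as [|b t']; [left; exists []; rewrite !app_nil_r; auto|].
      right; right; exists (a :: t), (b :: t'); repeat split; congruence.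
Qed.

Lemma app_length_le1 {A : Type} (t u : list A) :
  length (t ++ u) <= 1 -> t = [] \/ u = [].
Proof. rewrite length_app; destruct t, u; simpl; auto; lia. Qed.

Lemma gmulgV (X : Grp) (g : X) : gmul X g (ginv X g) = gone X.
Proof.
  rewrite <- (gmul1g X (gmul X g (ginv X g))), <- (gmulVg X (ginv X g)) at 1.
  rewrite <- gmulA, (gmulA X (ginv X g) g), gmulVg, gmul1g; apply gmulVg.
Qed.

Lemma gmulg1 (X : Grp) (g : X) : gmul X g (gone X) = g.
Proof. rewrite <- (gmulVg X g), gmulA, gmulgV, gmul1g; reflexivity. Qed.

Lemma ginv_neq1 (X : Grp) (g : X) : g <> gone X -> ginv X g <> gone X.
Proof. intros Hg E; apply Hg; rewrite <- (gmulg1 X g), <- E at 1; apply gmulgV. Qed.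

Section BrittonWords.
Variable G : GraphOfGroups.

Fixpoint edges (w : word G) : nat :=
  match w with
  | [] => 0
  | Edge _ _ :: w' => S (edges w')
  | _ :: w' => edges w'
  end.

Lemma edges_app (u v : word G) : edges (u ++ v) = edges u + edges v.
Proof. induction u as [|[] u IH]; simpl; lia. Qed.

Lemma edges_rev (w : word G) : edges (rev w) = edges w.
Proof. induction w as [|[] w IH]; simpl; rewrite ?edges_app; simpl; lia. Qed.

Lemma gword_edges (a : V G) (g : Gv G a) : edges (gword G a g) = 0.
Proof. unfold gword; destruct excluded_middle_informative; reflexivity. Qed.

Lemma gword_length (a : V G) (g : Gv G a) : length (gword G a g) <= 1.
Proof. unfold gword; destruct excluded_middle_informative; simpl; lia. Qed.

Lemma gword_one (a : V G) : gword G a (gone (Gv G a)) = [].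
Proof. unfold gword; destruct excluded_middle_informative; congruence. Qed.

Lemma brule_lhs_length (l r : word G) : brule l r -> 2 <= length l.
Proof. destruct 1; simpl; rewrite ?length_app; simpl; lia. Qed.

Lemma brule_rhs_edges (l r : word G) : brule l r -> edges r = 0.
Proof. destruct 1; apply gword_edges. Qed.

Lemma brule_rhs_length (l r : word G) : brule l r -> length r <= 1.
Proof. destruct 1; apply gword_length. Qed.

Lemma edges_head_split (e : E G) (t l1 M l3 : word G) :
  Edge G e :: t = l1 ++ M ++ l3 -> edges M = 0 -> l1 ++ M <> [] -> 1 <= edges l1.
Proof.
  destruct l1 as [|a l1]; simpl; [destruct M as [|m M]; [congruence|]|];
    intros [= <- _]; simpl; lia.
Qed.

Lemma brule_balanced (l r l1 M l3 : word G) : brule l r -> l = l1 ++ M ++ l3 ->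
  edges M = 0 -> l1 ++ M <> [] -> M ++ l3 <> [] -> edges l1 = edges l3.
Proof.
  intros Hr El HM N1 N3; destruct Hr as [a g h Hg Hh | y c].
  - apply (f_equal edges) in El; rewrite !edges_app in El; simpl in El; lia.
  - set (gw := gword G _ (cbar G y c)) in El.
    assert (Hgw : edges gw = 0) by apply gword_edges.
    assert (H1 : 1 <= edges l1).
    { apply (edges_head_split y (gw ++ [Edge G (bar G y)]) l1 M l3); auto. }
    assert (H3 : 1 <= edges (rev l3)).
    { apply (edges_head_split (bar G y) (rev gw ++ [Edge G y]) (rev l3) (rev M) (rev l1)).
      - apply (f_equal (@rev _)) in El; simpl in El; rewrite !rev_app_distr, <- !app_assoc in El.
        exact El.
      - rewrite edges_rev; exact HM.
      - rewrite <- rev_app_distr; intros E; apply N3.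
        rewrite <- (rev_involutive (M ++ l3)), E; reflexivity. }
    rewrite edges_rev in H3.
    apply (f_equal edges) in El; simpl in El; rewrite !edges_app in El; simpl in El; lia.
Qed.

Lemma britton_reduced_no_redex (w x l z r : word G) :
  britton_reduced w -> brule l r -> w = x ++ l ++ z -> False.
Proof. intros Hw Hr ->; apply Hw; exists (x ++ r ++ z), x, z, l, r; auto. Qed.

Lemma britton_reduced_infix (x y z : word G) :
  britton_reduced (x ++ y ++ z) -> britton_reduced y.
Proof.
  intros Hw [y' [x' [z' [l [r [Hr [-> _]]]]]]].
  apply (britton_reduced_no_redex _ (x ++ x') l (z' ++ z) r Hw Hr).
  rewrite <- !app_assoc; reflexivity.
Qed.

Lemma redex_covers_middle (Lw M Rw x l z r : word G) : brule l r ->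
  x ++ l ++ z = Lw ++ M ++ Rw -> length M <= 1 ->
  britton_reduced Lw -> britton_reduced Rw ->
  exists l1 l3, l = l1 ++ M ++ l3 /\ Lw = x ++ l1 /\ Rw = l3 ++ z.
Proof.
  intros Hr E HM HLw HRw.
  apply infix_app_cases in E as [[t [ELw _]] | [[t [EMR ->]] | [l1 [l2 [-> [_ [N2 [-> EMR]]]]]]]].
  - destruct (britton_reduced_no_redex _ _ _ _ _ HLw Hr ELw).
  - symmetry in EMR.
    apply infix_app_cases in EMR
      as [[t' [EM _]] | [[t' [ERw _]] | [l1 [l2 [-> [N1 [_ [EM ERw]]]]]]]].
    + apply (f_equal (@length _)) in EM; rewrite !length_app in EM.
      pose proof (brule_lhs_length _ _ Hr); lia.
    + destruct (britton_reduced_no_redex _ _ _ _ _ HRw Hr ERw).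
    + rewrite EM in HM; destruct (app_length_le1 _ _ HM) as [-> | ->]; [|congruence].
      exists [], l2; subst M; rewrite !app_nil_r; auto.
  - apply app_eq_app in EMR as [t [[EM Ez] | [-> ERw]]].
    + rewrite EM in HM; destruct (app_length_le1 _ _ HM) as [-> | ->]; [congruence|].
      exists l1, []; rewrite app_nil_r in EM; subst; rewrite app_nil_r; auto.
    + exists l1, t; auto.
Qed.

Lemma cyc_britton_reduced_of_wrap_free (w : word G) : britton_reduced w ->
  (forall p mid s r, w = p ++ mid ++ s -> p <> [] -> s <> [] -> brule (s ++ p) r -> False) ->
  cyc_britton_reduced w.
Proof.
  intros Hw Hwrap u u' -> [v [x [z [l [r [Hr [E _]]]]]]].
  symmetry in E; apply infix_app_cases in E
    as [[t [-> _]] | [[t [-> _]] | [l1 [l2 [-> [N1 [N2 [-> ->]]]]]]]].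
  - apply (britton_reduced_no_redex _ (u ++ x) l t r Hw Hr); rewrite <- !app_assoc; auto.
  - apply (britton_reduced_no_redex _ t l (z ++ u') r Hw Hr); rewrite <- !app_assoc; auto.
  - apply (Hwrap l2 (z ++ x) l1 r); rewrite <- ?app_assoc; auto.
Qed.

Lemma conj_redex_split (s p gw : word G) (e y y' : E G) : s <> [] ->
  s ++ Edge G e :: p = Edge G y :: gw ++ [Edge G y'] -> edges gw = 0 ->
  s = Edge G y :: gw /\ p = [] /\ e = y'.
Proof.
  destruct s as [|a s]; [congruence|]; simpl; intros _ [= -> E] Hgw.
  destruct p as [|q p _] using rev_ind.
  - apply app_inj_tail in E as [-> [= ->]]; auto.
  - rewrite app_comm_cons, app_assoc in E; apply app_inj_tail in E as [E _].
    rewrite <- E, edges_app in Hgw; simpl in Hgw; lia.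
Qed.

Section Rotation.
Variables (P S : word G) (d : nat).
Hypothesis HPS : britton_reduced (P ++ S).

Definition junction_form (v : word G) : Prop :=
  exists Lw M Rw tS tP, v = Lw ++ M ++ Rw /\ S = Lw ++ tS /\ P = tP ++ Rw /\
    edges M = 0 /\ length M <= 1 /\ edges Lw = edges Rw + d.

Lemma junction_form_init : edges S = edges P + d -> junction_form (S ++ P).
Proof.
  intros HSP; exists S, [], P, [], []; repeat split; simpl; rewrite ?app_nil_r; auto.
Qed.

Lemma junction_form_bstep (v v' : word G) : junction_form v -> bstep v v' -> junction_form v'.
Proof.
  intros [Lw [M [Rw [tS [tP [-> [ES [EP [HM0 [HM1 Hbal]]]]]]]]]] [x [z [l [r [Hr [E ->]]]]]].
  assert (HLw : britton_reduced Lw).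
  { apply (britton_reduced_infix P Lw tS); rewrite <- ES; exact HPS. }
  assert (HRw : britton_reduced Rw).
  { apply (britton_reduced_infix tP Rw S); rewrite app_assoc, <- EP; exact HPS. }
  symmetry in E.
  destruct (redex_covers_middle _ _ _ _ _ _ _ Hr E HM1 HLw HRw) as [l1 [l3 [El [-> ->]]]].
  assert (Hl13 : edges l1 = edges l3).
  { apply (brule_balanced _ _ _ _ _ Hr El HM0); intros N; apply app_eq_nil in N as [-> ->];
      simpl in El; subst l.
    - apply (britton_reduced_no_redex _ [] l3 z r HRw Hr); reflexivity.
    - rewrite app_nil_r in Hr; apply (britton_reduced_no_redex _ x l1 [] r HLw Hr).
      rewrite app_nil_r; reflexivity. }
  exists x, r, z, (l1 ++ tS), (tP ++ l3); repeat split.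
  - rewrite ES, <- app_assoc; reflexivity.
  - rewrite EP, <- app_assoc; reflexivity.
  - exact (brule_rhs_edges _ _ Hr).
  - exact (brule_rhs_length _ _ Hr).
  - rewrite !edges_app in Hbal; lia.
Qed.

Lemma junction_form_bsteps (v v' : word G) :
  clos_refl_trans (word G) (@bstep G) v v' -> junction_form v -> junction_form v'.
Proof. induction 1; eauto using junction_form_bstep. Qed.

Hypothesis HS : exists e t, S = Edge G e :: t.

Lemma junction_form_head_edge (v : word G) : junction_form v -> 1 <= edges v ->
  exists e t t', S = Edge G e :: t /\ v = Edge G e :: t'.
Proof.
  intros [Lw [M [Rw [tS [tP [-> [ES [_ [HM0 [_ Hbal]]]]]]]]]] Hv.
  destruct Lw as [|a Lw].
  - simpl in Hbal, Hv; rewrite edges_app in Hv; lia.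
  - destruct HS as [e [t ES']]; rewrite ES' in ES; injection ES as <- _.
    exists e, t, (Lw ++ M ++ Rw); auto.
Qed.

Hypothesis HP : forall t t', P = t ++ t' -> edges t' = 0 -> length t' <= 1.

Lemma junction_form_edge_free_short (v : word G) : junction_form v -> edges v = 0 -> length v <= 2.
Proof.
  intros [Lw [M [Rw [tS [tP [-> [ES [EP [HM0 [HM1 Hbal]]]]]]]]]] Hv.
  rewrite !edges_app in Hv.
  destruct Lw as [|a Lw].
  - pose proof (HP tP Rw EP ltac:(lia)); simpl; rewrite length_app; lia.
  - destruct HS as [e [t ES']]; rewrite ES' in ES; injection ES as <- _; simpl in Hv; lia.
Qed.

Hypothesis Hd : d <= 1.

Lemma junction_form_suffix_in_P (v q t : word G) (a : letter G) : junction_form v ->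
  v = q ++ a :: t -> edges t = 0 -> 2 <= edges v -> exists u, P = u ++ a :: t.
Proof.
  intros [Lw [M [Rw [tS [tP [-> [_ [EP [HM0 [_ Hbal]]]]]]]]]] Ev Ht Hv.
  rewrite app_assoc in Ev; apply app_eq_app in Ev as [u [[_ Eat] | [_ ERw]]].
  - destruct u as [|b u]; simpl in Eat; [exists tP; rewrite EP, Eat; reflexivity|].
    injection Eat as _ ->; rewrite edges_app in Ht; rewrite !edges_app in Hv; lia.
  - exists (tP ++ u); rewrite EP, ERw, <- app_assoc; reflexivity.
Qed.

Lemma junction_form_wrap_free (w : word G) : junction_form w -> britton_reduced w ->
  forall p mid s r, w = p ++ mid ++ s -> p <> [] -> s <> [] -> brule (s ++ p) r -> False.
Proof.
  intros Hjf Hw p mid s r Ew Np Ns Hr.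
  remember (s ++ p) as l eqn:El; destruct Hr as [a g h Hg Hh | y c].
  - destruct s as [|x1 [|x2 s]]; [congruence| |]; injection El.
    2:{ intros E _ _; destruct p, s; simpl in E; congruence. }
    intros <- <-.
    assert (Hw0 : edges w = 0).
    { destruct (Nat.eq_0_gt_0_cases (edges w)) as [|Hpos]; [assumption|].
      destruct (junction_form_head_edge _ Hjf Hpos) as [e [t [t' [_ Ew']]]].
      rewrite Ew in Ew'; discriminate. }
    pose proof (junction_form_edge_free_short _ Hjf Hw0) as Hlen.
    rewrite Ew in Hlen; simpl in Hlen; rewrite length_app in Hlen.
    destruct mid; [|simpl in Hlen; lia].
    apply (britton_reduced_no_redex _ [] _ [] _ Hw (@br_mul G a h g Hh Hg)); exact Ew.
  - set (gw := gword G _ (cbar G y c)) in El.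
    assert (Hgw : edges gw = 0) by apply gword_edges.
    assert (Hv : 2 <= edges w).
    { apply (f_equal edges) in El; apply (f_equal edges) in Ew.
      rewrite !edges_app in El; rewrite !edges_app in Ew; simpl in El; lia. }
    destruct (junction_form_head_edge _ Hjf ltac:(lia)) as [e [tS [t' [ES Ew']]]].
    destruct p as [|b p]; [congruence|]; rewrite Ew in Ew'; injection Ew' as -> _.
    destruct (conj_redex_split s p gw e y (bar G y) Ns (eq_sym El) Hgw) as [-> [-> ->]].
    destruct (junction_form_suffix_in_P w (Edge G (bar G y) :: mid) gw (Edge G y) Hjf) as [u EP];
      [rewrite Ew; reflexivity | exact Hgw | exact Hv |].
    apply (britton_reduced_no_redex _ u _ tS _ HPS (@br_conj G y c)).
    rewrite EP, ES, <- !app_assoc; simpl; rewrite <- ?app_assoc; reflexivity.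
Qed.

End Rotation.

Definition inv_letter (a : letter G) : letter G :=
  match a with
  | Edge _ y => Edge G (bar G y)
  | Elt _ b g Hg => Elt G b (ginv _ g) (ginv_neq1 _ g Hg)
  end.

Definition inv_word (w : word G) : word G := rev (map inv_letter w).

Lemma feq_ctx (x u v z : word G) : feq u v -> feq (x ++ u ++ z) (x ++ v ++ z).
Proof.
  induction 1 as [u v [x' [z' [l [r [Hr [-> ->]]]]]] | | u v _ IH | u v w _ IH1 _ IH2].
  - apply rst_step; exists (x ++ x'), (z' ++ z), l, r; rewrite <- !app_assoc; auto.
  - apply rst_refl.
  - apply rst_sym, IH.
  - apply rst_trans with (x ++ v ++ z); assumption.
Qed.

Lemma feq_frel (l r : word G) : frel l r -> feq l r.
Proof. intros Hr; apply rst_step; exists [], [], l, r; rewrite !app_nil_r; auto. Qed.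

Lemma feq_letter_inv_r (a : letter G) : feq [a; inv_letter a] [].
Proof.
  apply feq_frel; destruct a as [y | b g Hg]; simpl.
  - pose proof (fr_inv G (bar G y)) as F; rewrite bar_bar in F; exact F.
  - pose proof (@fr_mul G b g (ginv _ g) Hg (ginv_neq1 _ g Hg)) as F.
    rewrite gmulgV, gword_one in F; exact F.
Qed.

Lemma feq_letter_inv_l (a : letter G) : feq [inv_letter a; a] [].
Proof.
  apply feq_frel; destruct a as [y | b g Hg]; simpl.
  - apply fr_inv.
  - pose proof (@fr_mul G b (ginv _ g) g (ginv_neq1 _ g Hg) Hg) as F.
    rewrite gmulVg, gword_one in F; exact F.
Qed.

Lemma feq_word_inv_r (w : word G) : feq (w ++ inv_word w) [].
Proof.
  induction w as [|a w IH]; [apply rst_refl|]; unfold inv_word in *; simpl.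
  apply rst_trans with ([a] ++ [] ++ [inv_letter a]); [|apply feq_letter_inv_r].
  rewrite app_assoc; apply (feq_ctx [a] _ [] [inv_letter a]), IH.
Qed.

Lemma feq_word_inv_l (w : word G) : feq (inv_word w ++ w) [].
Proof.
  induction w as [|a w IH]; [apply rst_refl|]; unfold inv_word in *; simpl.
  apply rst_trans with (rev (map inv_letter w) ++ [] ++ w); [|exact IH].
  rewrite <- app_assoc; apply (feq_ctx _ [inv_letter a; a] [] w), feq_letter_inv_l.
Qed.

Lemma feq_bsteps (u v : word G) : clos_refl_trans (word G) (@bstep G) u v -> feq u v.
Proof.
  induction 1 as [u v [x [z [l [r [Hr [-> ->]]]]]] | | u v w _ IH1 _ IH2].
  - apply rst_step; exists x, z, l, r; destruct Hr; repeat constructor.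
  - apply rst_refl.
  - apply rst_trans with v; assumption.
Qed.

Lemma conjugate_swap (P S w : word G) : feq (S ++ P) w -> conjugate (P ++ S) w.
Proof.
  intros HSP; exists (inv_word P), P.
  split; [apply feq_word_inv_l|]; split; [apply feq_word_inv_r|].
  apply rst_trans with ([] ++ S ++ P); [|exact HSP].
  rewrite <- (app_assoc P S P), app_assoc; apply (feq_ctx [] _ [] (S ++ P)), feq_word_inv_l.
Qed.

Lemma edges_segwords (L : list (seg G)) : edges (concat (map (@segword G) L)) = length L.
Proof.
  induction L as [|s L IH]; simpl; [reflexivity|].
  rewrite edges_app, IH, gword_edges; reflexivity.
Qed.

Lemma edges_fword (a0 : V G) (g0 : Gv G a0) (L : list (seg G)) :
  edges (fword a0 g0 L) = length L.
Proof. unfold fword; rewrite edges_app, gword_edges, edges_segwords; reflexivity. Qed.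

Lemma fword_edge_free_suffix (a0 : V G) (g0 : Gv G a0) (L : list (seg G)) (t t' : word G) :
  fword a0 g0 L = t ++ t' -> edges t' = 0 -> length t' <= 1.
Proof.
  unfold fword; destruct L as [|s L _] using rev_ind.
  - rewrite app_nil_r; intros E _; pose proof (gword_length a0 g0) as H.
    rewrite E, length_app in H; lia.
  - rewrite map_app, concat_app; simpl; rewrite app_nil_r, app_assoc.
    intros E Ht; symmetry in E; apply app_eq_app in E as [u [[_ Es] | [_ ->]]].
    + destruct u as [|b u]; simpl in Es; [subst t'; simpl in Ht; lia|].
      injection Es as _ Es; pose proof (gword_length _ (projT2 s)) as H.
      rewrite Es, length_app in H; lia.
    + rewrite edges_app in Ht; simpl in Ht; lia.
Qed.

End BrittonWords.

Theorem lemma4p2 (G : GraphOfGroups) (a0 : V G) (g0 : Gv G a0)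
  (segs : list (seg G)) (what : word G) :
  is_factorization a0 segs ->
  1 <= length segs ->
  britton_reduced (fword a0 g0 segs) ->
  clos_refl_trans (word G) (@bstep G) (rotated a0 g0 segs) what ->
  britton_reduced what ->
  cyc_britton_reduced what /\ conjugate (fword a0 g0 segs) what.
Proof.
  intros _ Hn Hw Hrot Hwhat.
  set (k := length segs / 2) in Hrot.
  set (P := fword a0 g0 (firstn k segs)).
  set (S := concat (map (@segword G) (skipn k segs))).
  assert (Hk : 2 * k <= length segs <= 2 * k + 1).
  { pose proof (Nat.div_mod_eq (length segs) 2); pose proof (Nat.mod_upper_bound (length segs) 2).
    unfold k; lia. }
  assert (Hd : length segs - k - k <= 1) by lia.
  assert (HS : exists e t, S = Edge G e :: t).
  { unfold S; destruct (skipn k segs) as [|[y g] rest] eqn:Es; [|exists y; eexists; reflexivity].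
    apply (f_equal (@length _)) in Es; rewrite length_skipn in Es; simpl in Es; lia. }
  assert (EwPS : fword a0 g0 segs = P ++ S).
  { unfold P, S, fword.
    rewrite <- app_assoc, <- concat_app, <- map_app, firstn_skipn; reflexivity. }
  rewrite EwPS in Hw |- *.
  assert (Hjf : junction_form G P S (length segs - k - k) what).
  { apply (junction_form_bsteps G P S _ Hw (S ++ P)); [exact Hrot|].
    apply junction_form_init; unfold S, P.
    rewrite edges_fword, edges_segwords, length_skipn, length_firstn; lia. }
  split.
  - apply (cyc_britton_reduced_of_wrap_free G _ Hwhat).
    apply (junction_form_wrap_free G P S _ Hw HS (fword_edge_free_suffix G a0 g0 _) Hd); assumption.
  - apply conjugate_swap, feq_bsteps, Hrot.
Qed.
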